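(* Let $n\ge2$ and let $P_n$ be the path with vertex set $\{1,\dots,n\}$ and edges $\{k,k+1\}$. If $S$ is the eigenvalue support of an edge state $e_k-e_{k+1}$ ($1\le k\le n-1$) with respect to the Laplacian of $P_n$, then $|S|\ge n/2$.
   Context: Let $L$ be the Laplacian of a graph with spectral decomposition $L=\sum_r\theta_rE_r$ ($\theta_r$ distinct eigenvalues, $E_r$ orthogonal projections onto eigenspaces). The eigenvalue support of a vector $x$ is the set of $\theta_r$ with $E_rx\neq0$. *)

From HB Require Import structures.
From mathcomp Require Import all_boot all_order all_algebra.
From mathcomp Require Import reals.
Set Implicit Arguments. Unset Strict Implicit. Unset Printing Implicit Defensive.
Import Order.TTheory GRing.Theory Num.Theory.
Local Open Scope ring_scope.

(* Path P_n on vertices 'I_n (vertex i here = vertex i+1 in the paper);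
   edges {k, k+1}. *)
Definition path_adj (n : nat) (i j : 'I_n) : bool :=
  (i.+1 == j :> nat) || (j.+1 == i :> nat).

Definition path_deg (n : nat) (i : 'I_n) : nat := #|[pred j | path_adj i j]|.

Definition path_laplacian (R : numDomainType) (n : nat) : 'M[R]_n :=
  \matrix_(i, j) (if i == j then (path_deg i)%:R
                  else if path_adj i j then -1 else 0).

Definition edge_state (R : numDomainType) (n : nat) (k : 'I_n) : 'rV[R]_n :=
  \row_i ((i == k :> nat)%:R - (i == k.+1 :> nat)%:R).

Definition is_eigenprojection (R : fieldType) (n : nat) (M : 'M[R]_n)
  (theta : R) (P : 'M[R]_n) : Prop :=
  [/\ P^T = P, P *m P = P & (P == eigenspace M theta)%MS].

Definition in_eigen_support (R : fieldType) (n : nat) (M : 'M[R]_n)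
  (x : 'rV[R]_n) (theta : R) : Prop :=
  eigenvalue M theta /\
  exists P : 'M[R]_n, is_eigenprojection M theta P /\ x *m P != 0.

From HB Require Import structures.
From mathcomp Require Import all_boot all_order all_algebra.
From mathcomp Require Import reals.
From mathcomp Require Import complex zify.
Set Implicit Arguments.
Unset Strict Implicit.
Unset Printing Implicit Defensive.
Import Order.TTheory GRing.Theory Num.Theory.
Local Open Scope ring_scope.

(* The support polynomial q := \prod_(theta in S) ('X - theta) satisfies
   x q(L) = 0: L is symmetric with real spectrum, so x splits into its components
   in the eigenspaces, and q kills every component in the support while the
   others vanish.  Hence the Krylov vectors x L^i span a space of dimension at
   most |S|.  On the path, x L^i is (-1)^i at vertex k - i, (-1)^(i+1) at
   vertex k + 1 + i and zero beyond, so the first max(k + 1, n - k - 1)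
   Krylov vectors are triangular, hence independent, and
   max(k + 1, n - k - 1) >= n/2. *)

Section OrthogonalProjection.
Variable R : realFieldType.

Lemma mulmx_tr_self_eq0 m (w : 'rV[R]_m) : w *m w^T = 0 -> w = 0.
Proof.
move=> /matrixP /(_ 0 0); rewrite !mxE => /eqP.
rewrite psumr_eq0 => [/allP w0|i _]; last by rewrite mxE -expr2 sqr_ge0.
apply/rowP => i; have /implyP := w0 i (mem_index_enum _).
by rewrite mxE -expr2 sqrf_eq0 mxE => /(_ isT) /eqP.
Qed.

Lemma orthoproj_exists n (V : 'M[R]_n) :
  exists P : 'M[R]_n, [/\ P^T = P, P *m P = P & (P == V)%MS].
Proof.
have BV := eq_row_base V; have Bfree := row_base_free V.
move: (row_base V) BV Bfree => B BV Bfree.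
have BBt_unit : B *m B^T \in unitmx.
  rewrite -row_free_unit -kermx_eq0; apply/eqP/row_matrixP => i.
  rewrite row0; set u := row i _.
  have uBBt : u *m (B *m B^T) = 0 by rewrite /u -row_mul mulmx_ker row0.
  have uB : u *m B = 0.
    apply: mulmx_tr_self_eq0.
    by rewrite trmx_mul mulmxA -(mulmxA u) uBBt mul0mx.
  by apply/eqP; rewrite -(mulmx_free_eq0 _ Bfree) uB.
exists (B^T *m invmx (B *m B^T) *m B); split.
- by rewrite !trmx_mul trmxK trmx_inv trmx_mul trmxK mulmxA.
- by rewrite !mulmxA -(mulmxA _ B) mulmxKV.
- apply/andP; split; first by rewrite -BV submxMl.
  rewrite -BV; have {1}-> : B = B *m (B^T *m invmx (B *m B^T) *m B).
    by rewrite !mulmxA mulmxV // mul1mx.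
  exact: submxMl.
Qed.

Lemma in_eigen_supportE n (M : 'M[R]_n) (x : 'rV[R]_n) theta :
  in_eigen_support M x theta <-> x *m (eigenspace M theta)^T != 0.
Proof.
set E := eigenspace M theta.
have projE P : P^T = P -> (P == E)%MS -> (x *m P == 0) = (x *m E^T == 0).
  move=> Psym /andP[/submxP[W PW] /submxP[W' EW]].
  apply/eqP/eqP => x0; first by rewrite EW trmx_mul mulmxA Psym x0 mul0mx.
  by rewrite -Psym PW trmx_mul mulmxA x0 mul0mx.
split=> [[_ [P [[Psym _ PE] xP0]]]|xE0]; first by rewrite -(projE P).
split; last first.
  have [P [Psym PP PE]] := orthoproj_exists E.
  by exists P; split; [split | rewrite (projE P)].
rewrite /eigenvalue -/E; apply: contraNneq xE0 => ->.
by rewrite trmx0 mulmx0.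
Qed.

End OrthogonalProjection.

Section HornerMx.
Variables (R : comNzRingType) (n : nat) (A : 'M[R]_n.+1).

Lemma mulmx_horner_eigen m (W : 'M[R]_(m, n.+1)) a p :
  W *m A = a *: W -> W *m horner_mx A p = p.[a] *: W.
Proof.
move=> WA; elim/poly_ind: p => [|p c IHp].
  by rewrite rmorph0 horner0 mulmx0 scale0r.
rewrite rmorphD rmorphM /= horner_mx_X horner_mx_C -mulmxE mulmxDr mulmxA IHp.
by rewrite -scalemxAl WA scalerA mul_mx_scalar !hornerE scalerDl.
Qed.

Lemma trmx_horner_mx p : (horner_mx A p)^T = horner_mx A^T p.
Proof.
elim/poly_ind: p => [|p c IHp]; first by rewrite !rmorph0 trmx0.
rewrite !rmorphD !rmorphM /= !horner_mx_X !horner_mx_C -!mulmxE.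
rewrite linearD /= trmx_mul IHp tr_scalar_mx; congr (_ + _).
by rewrite mulmxE; apply: comm_mx_horner.
Qed.

End HornerMx.

Section SymmetricMx.
Variables (R : realFieldType) (n : nat) (L : 'M[R]_n.+1).
Hypothesis Lsym : L^T = L.

Lemma ortho_eigenspaces_kernel_eq0 (t : seq R) (z : 'rV[R]_n.+1) :
  (forall theta, theta \in t -> z *m (eigenspace L theta)^T = 0) ->
  z *m horner_mx L (\prod_(theta <- t) ('X - theta%:P)) = 0 -> z = 0.
Proof.
elim: t z => [|theta t IHt] z zE; first by rewrite big_nil rmorph1 mulmx1.
rewrite big_cons mulrC rmorphM /= -mulmxE mulmxA => zM0.
apply: IHt => [th th_t|]; first by apply: zE; rewrite inE th_t orbT.
set M := horner_mx L _ in zM0 *; set u := z *m M.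
have uE : (u <= eigenspace L theta)%MS.
  by apply/sub_kermxP; rewrite -zM0 rmorphB /= horner_mx_X horner_mx_C.
have [w uw] := submxP uE.
have zu : z *m u^T = 0 by rewrite uw trmx_mul mulmxA zE ?mem_head // mul0mx.
have uM := mulmx_horner_eigen (\prod_(j <- t) ('X - j%:P)) (eigenspaceP uE).
have Msym : M^T = M by rewrite trmx_horner_mx Lsym.
(* M is symmetric and u is a theta-eigenvector: u u^T = z (u M)^T is a
   multiple of z u^T = 0. *)
apply: mulmx_tr_self_eq0.
rewrite {1}/u -mulmxA -{1}Msym -trmx_mul uM.
by rewrite linearZ /= -scalemxAr zu scaler0.
Qed.

Lemma horner_eigen_support_eq0 (s : seq R) (x : 'rV[R]_n.+1) :
  horner_mx L (\prod_(theta <- s) ('X - theta%:P)) = 0 ->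
  x *m horner_mx L
    (\prod_(theta <- s | x *m (eigenspace L theta)^T != 0) ('X - theta%:P)) = 0.
Proof.
pose supp theta := x *m (eigenspace L theta)^T != 0.
set q := \prod_(theta <- s | supp theta) _ => annL.
apply: (ortho_eigenspaces_kernel_eq0 (t := [seq theta <- s | ~~ supp theta])).
  move=> theta; rewrite mem_filter negbK => /andP[/eqP xE0 _].
  have EL : eigenspace L theta *m L = theta *: eigenspace L theta.
    exact/eigenspaceP.
  rewrite -mulmxA -{1}Lsym -trmx_horner_mx -trmx_mul (mulmx_horner_eigen q EL).
  by rewrite linearZ /= -scalemxAr xE0 scaler0.
rewrite (bigID supp) /= in annL.
by rewrite -mulmxA mulmxE -rmorphM /= big_filter annL mulmx0.
Qed.

End SymmetricMx.

Lemma realsym_split_annihilator (R : rcfType) n (L : 'M[R]_n.+1) : L^T = L ->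
  exists2 s : seq R, uniq s & horner_mx L (\prod_(r <- s) ('X - r%:P)) = 0.
Proof.
move=> Lsym; pose A := map_mx (real_complex R) L.
have Aherm : A \is hermsymmx.
  apply: realsym_hermsym; last first.
    by apply/mxOverP => i j; rewrite mxE complex_real.
  by apply/is_hermitianmxP; rewrite expr0 scale1r map_mx_id // /A map_trmx Lsym.
have := hermitian_normalmx Aherm => /orthomx_spectralP A_spectral.
have /mxOverP d_real := hermitian_spectral_diag_real Aherm.
set d := spectral_diag A in A_spectral d_real.
set P := spectralmx A in A_spectral.
pose s := undup [seq complex.Re (d 0 i) | i : 'I_n.+1].
exists s; first exact: undup_uniq.
apply: (map_mx_inj (f := real_complex R)); rewrite map_mx0 map_horner_mx -/A.
rewrite A_spectral horner_mx_uconjC ?spectral_unit // horner_mx_diag.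
suff -> : map_mx (horner (map_poly (real_complex R)
                            (\prod_(r <- s) ('X - r%:P)))) d = 0.
  by rewrite raddf0 mulmx0 mul0mx.
apply/rowP => i; rewrite !mxE rmorph_prod horner_prod; apply/eqP.
rewrite prodf_seq_eq0; apply/hasP; exists (complex.Re (d 0 i)).
  by rewrite mem_undup; apply/mapP; exists i; rewrite ?mem_enum.
by rewrite rmorphB /= map_polyX map_polyC /= !hornerE /= RRe_real ?subrr.
Qed.

Lemma eigenvalue_split_annihilator (F : fieldType) n (A : 'M[F]_n.+1) s a :
  horner_mx A (\prod_(r <- s) ('X - r%:P)) = 0 -> eigenvalue A a -> a \in s.
Proof.
move=> /mxminpoly_min annA; rewrite eigenvalue_root_min -root_prod_XsubC.
exact: root_dvdp.
Qed.

Section Krylov.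
Variables (F : fieldType) (n : nat) (A : 'M[F]_n.+1) (x : 'rV[F]_n.+1).

Definition krylovmx J := \matrix_(i < J) (x *m A ^+ i).

Lemma krylovmx_sub_annihilated q i : q != 0 -> x *m horner_mx A q = 0 ->
  (x *m A ^+ i <= krylovmx (size q).-1)%MS.
Proof.
move=> q0 xq; set r := 'X^i %% q.
have xAi : x *m A ^+ i = x *m horner_mx A r.
  have -> : A ^+ i = horner_mx A 'X^i by rewrite rmorphXn /= horner_mx_X.
  rewrite {1}(divp_eq 'X^i q) rmorphD rmorphM /= (comm_horner_mx2 A).
  by rewrite -mulmxE mulmxDr mulmxA xq mul0mx add0r.
have size_r : (size r <= (size q).-1)%N.
  by rewrite -ltnS prednK ?ltn_modp // lt0n size_poly_eq0.
rewrite xAi -(coefK r) poly_def linear_sum mulmx_sumr /=.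
apply: summx_sub => j _; rewrite linearZ /= -scalemxAr rmorphXn /= horner_mx_X.
have jq : (j < (size q).-1)%N by apply: leq_trans size_r.
apply: scalemx_sub.
by rewrite -(rowK (fun i : 'I_ _ => x *m A ^+ i) (Ordinal jq)) row_sub.
Qed.

Lemma krylovmx_row_free_lt q J : q != 0 -> x *m horner_mx A q = 0 ->
  row_free (krylovmx J) -> (J < size q)%N.
Proof.
move=> q0 xq /eqnP rkJ.
rewrite -(prednK (_ : 0 < size q)%N) ?lt0n ?size_poly_eq0 // ltnS -{1}rkJ.
apply: leq_trans (rank_leq_row (krylovmx (size q).-1)).
by apply: mxrankS; apply/row_subP => i; rewrite rowK krylovmx_sub_annihilated.
Qed.

End Krylov.

Lemma row_free_trig (F : fieldType) J m (K : 'M[F]_(J, m)) (c : 'I_J -> 'I_m) :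
  (forall i j : 'I_J, (i < j)%N -> K i (c j) = 0) ->
  (forall i : 'I_J, K i (c i) != 0) -> row_free K.
Proof.
move=> Kup Kdiag; have Kc_unit : colsub c K \in unitmx.
  rewrite unitmxE det_trig; last first.
    by apply/is_trig_mxP => i j ij; rewrite mxE Kup.
  by rewrite unitfE; apply/prodf_neq0 => i _; rewrite mxE.
rewrite /row_free eqn_leq rank_leq_row -{1}(mxrank_unit Kc_unit).
by rewrite -[K in colsub _ K]mulmx1 -mulmx_colsub mxrankM_maxl.
Qed.

Section PathLaplacian.
Variables (R : numDomainType) (N : nat).
Local Notation L := (path_laplacian R N).

Lemma path_laplacian_sym : L^T = L.
Proof.
apply/matrixP => i j; rewrite !mxE eq_sym /path_adj orbC.
by case: eqP => // ->.
Qed.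

Lemma path_laplacian_far (a b : 'I_N) :
  (b.+1 < a)%N || (a.+1 < b)%N -> L b a = 0.
Proof.
move=> far; rewrite mxE /path_adj ifN; last first.
  by apply/eqP => ba; move: far; rewrite ba; lia.
by rewrite ifN //; move: far; lia.
Qed.

Lemma path_laplacian_adj (a b : 'I_N) :
  (b.+1 == a :> nat) || (a.+1 == b :> nat) -> L b a = -1.
Proof.
move=> adj; rewrite mxE /path_adj adj ifN //.
by apply/eqP => ba; move: adj; rewrite ba; lia.
Qed.

Lemma path_laplacian_front_right (v : 'rV[R]_N) (b a : 'I_N) :
  (forall c : 'I_N, (b < c)%N -> v 0 c = 0) -> (b < a)%N ->
  (v *m L) 0 a = if a == b.+1 :> nat then - v 0 b else 0.
Proof.
move=> v0 ba; rewrite mxE (bigD1 b) //= big1 => [|c cb]; last first.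
  have [bc|cb'] := ltnP b c; first by rewrite v0 ?mul0r.
  rewrite path_laplacian_far ?mulr0 //.
  by move: cb ba cb' => /eqP/val_eqP /=; lia.
case: eqP => [ab|/eqP ab].
  by rewrite path_laplacian_adj ?mulrN1 ?addr0 // ab eqxx.
by rewrite path_laplacian_far ?mulr0 ?addr0 //; lia.
Qed.

Lemma path_laplacian_front_left (v : 'rV[R]_N) (b a : 'I_N) :
  (forall c : 'I_N, (c < b)%N -> v 0 c = 0) -> (a < b)%N ->
  (v *m L) 0 a = if a.+1 == b :> nat then - v 0 b else 0.
Proof.
move=> v0 ab; rewrite mxE (bigD1 b) //= big1 => [|c cb]; last first.
  have [cb'|bc] := ltnP c b; first by rewrite v0 ?mul0r.
  rewrite path_laplacian_far ?mulr0 //.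
  by move: cb ab bc => /eqP/val_eqP /=; lia.
case: eqP => [ab'|/eqP ab'].
  by rewrite path_laplacian_adj ?mulrN1 ?addr0 // ab' eqxx orbT.
by rewrite path_laplacian_far ?mulr0 ?addr0 //; lia.
Qed.

Variable k : 'I_N.
Local Notation x := (edge_state R k).

Lemma edge_state_krylov_right i (a : 'I_N) : (k.+1 + i <= a)%N ->
  (x *m L ^+ i) 0 a = if a == (k.+1 + i)%N :> nat then (-1) ^+ i.+1 else 0.
Proof.
elim: i a => [|i IHi] a ka.
  rewrite expr0 mulmx1 mxE addn0 (_ : (a == k :> nat) = false); last first.
    by apply/negbTE/eqP; lia.
  by case: eqP => _; rewrite ?sub0r ?subrr /= ?mulr1n ?mulr0n ?oppr0.
have b_lt : (k.+1 + i < N)%N by move: (ltn_ord a); lia.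
pose b := Ordinal b_lt.
rewrite exprSr -mulmxE mulmxA.
rewrite (path_laplacian_front_right (b := b)) => [|c bc|/=]; last lia.
  by rewrite IHi //= eqxx addnS [in RHS]exprS mulN1r.
by move: bc => /= bc; rewrite IHi ?ifN //; lia.
Qed.

Lemma edge_state_krylov_left i (a : 'I_N) : (a + i <= k)%N ->
  (x *m L ^+ i) 0 a = if (a + i)%N == k :> nat then (-1) ^+ i else 0.
Proof.
elim: i a => [|i IHi] a ak.
  rewrite expr0 mulmx1 mxE addn0 (_ : (a == k.+1 :> nat) = false); last first.
    by apply/negbTE/eqP; lia.
  by case: eqP => _; rewrite ?subr0 ?subrr /= ?mulr1n ?mulr0n.
have b_lt : (a.+1 < N)%N by move: (ltn_ord k); lia.
pose b := Ordinal b_lt.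
rewrite exprSr -mulmxE mulmxA.
rewrite (path_laplacian_front_left (b := b)) => [|c cb|/=]; last exact: ltnSn.
  rewrite /= eqxx IHi /= addSnnS //.
  by case: eqP => _; rewrite ?oppr0 // exprS mulN1r.
by move: cb => /= cb; rewrite IHi ?ifN //; lia.
Qed.

End PathLaplacian.

Section EdgeStateKrylov.
Variables (R : numFieldType) (n : nat) (k : 'I_n.+1).
Local Notation L := (path_laplacian R n.+1).
Local Notation x := (edge_state R k).

Lemma row_free_krylov_edge_state_left : row_free (krylovmx L x k.+1).
Proof.
have c_lt (j : 'I_k.+1) : (k - j < n.+1)%N by move: (ltn_ord k); lia.
apply: (row_free_trig (c := fun j => Ordinal (c_lt j))) => [i j ij|i].
  by rewrite mxE edge_state_krylov_left /= ?ifN //; move: (ltn_ord j); lia.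
rewrite mxE edge_state_krylov_left /= ?ifT ?expf_neq0 ?oppr_eq0 ?oner_eq0 //;
  move: (ltn_ord i); lia.
Qed.

Lemma row_free_krylov_edge_state_right : (k.+1 < n.+1)%N ->
  row_free (krylovmx L x (n - k)).
Proof.
move=> kn; have c_lt (j : 'I_(n - k)) : (k.+1 + j < n.+1)%N.
  by move: (ltn_ord j); lia.
apply: (row_free_trig (c := fun j => Ordinal (c_lt j))) => [i j ij|i].
  by rewrite mxE edge_state_krylov_right /= ?ifN //; lia.
by rewrite mxE edge_state_krylov_right /= ?eqxx ?expf_neq0 ?oppr_eq0 ?oner_eq0.
Qed.

End EdgeStateKrylov.

Theorem mainTheorem17 (R : realType) (n : nat) (k : 'I_n) :
  (2 <= n)%N -> (k.+1 < n)%N ->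
  exists S : seq R,
    [/\ uniq S,
        (forall theta : R,
           in_eigen_support (path_laplacian R n) (edge_state R k) theta
           <-> theta \in S)
      & (n <= 2 * size S)%N].
Proof.
case: n k => [|n] k _ kn; first by case: k kn.
set L := path_laplacian R n.+1; set x := edge_state R k.
pose supp theta := x *m (eigenspace L theta)^T != 0.
have [s s_uniq annL] := realsym_split_annihilator (path_laplacian_sym R n.+1).
have supp_s theta : supp theta -> theta \in s.
  by move=> /in_eigen_supportE[/(eigenvalue_split_annihilator annL)].
exists [seq theta <- s | supp theta]; split.
- exact: filter_uniq.
- move=> theta; rewrite in_eigen_supportE mem_filter.
  by split=> [xE | /andP[]//]; rewrite supp_s // andbT.
- set S := [seq theta <- s | supp theta].
  have annx := horner_eigen_support_eq0 (path_laplacian_sym R n.+1) x annL.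
  rewrite -big_filter -/S in annx.
  have krylov_le J : row_free (krylovmx L x J) -> (J <= size S)%N.
    move/(krylovmx_row_free_lt _ annx); rewrite size_prod_XsubC; apply.
    exact/monic_neq0/monic_prod_XsubC.
  have := krylov_le _ (row_free_krylov_edge_state_left R k).
  have := krylov_le _ (row_free_krylov_edge_state_right R kn).
  move: (size S) => m; lia.
Qed.
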